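(* Let $n \geq 3$. Then $$\max_{G} T_{\min}(G) = \left\lfloor \tfrac{n}{2} \right\rfloor \cdot \left\lceil \tfrac{n}{2} \right\rceil \qquad\text{and}\qquad \max_{G} T_{\max}(G) = (n-1)^2,$$ where both maxima range over all strongly connected directed graphs $G$ on $n$ vertices.
   Context: Let $G=(V,E)$ be a strongly connected directed graph with $|V| = n$. An ordering is a bijection $\pi: V \to \{1,\dots,n\}$. For vertices $u,v$, let $d_G(u,v)$ denote the length (number of edges) of a shortest directed path from $u$ to $v$ in $G$. The communication time of ordering $\pi$ on $G$ is $$T(G,\pi) = \sum_{i=1}^{n-1} d_G\big(\pi^{-1}(i), \pi^{-1}(i+1)\big).$$ Define $T_{\min}(G) = \min_{\pi} T(G,\pi)$ and $T_{\max}(G) = \max_{\pi} T(G,\pi)$ over all orderings $\pi$. *)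

From mathcomp Require Import all_boot all_order all_fingroup.
Set Implicit Arguments. Unset Strict Implicit. Unset Printing Implicit Defensive.

Definition walkb (n : nat) (e : rel 'I_n) (k : nat) (u v : 'I_n) : bool :=
  [exists p : k.-tuple 'I_n, path e u p && (last u p == v)].

Definition strongly_connected (n : nat) (e : rel 'I_n) : Prop :=
  forall u v : 'I_n, connect e u v.

(* d_G(u,v): the least k such that a walk of length k from u to v exists.
   In a graph on n vertices, a shortest path (if any) has < n edges, so
   searching k in 0..n-1 is exhaustive. *)
Definition dist (n : nat) (e : rel 'I_n) (u v : 'I_n) : nat :=
  find (fun k => walkb e k u v) (iota 0 n).

(* Communication time of ordering pi (pi : vertex -> position):
   sum of d(pi^-1(i), pi^-1(i+1)) over consecutive positions. *)
Definition commtime (n : nat) (e : rel 'I_n) (pi : {perm 'I_n}) : nat :=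
  let s := [seq (pi^-1)%g i | i <- enum 'I_n] in
  \sum_(p <- zip s (behead s)) dist e p.1 p.2.

Definition Tmin (n : nat) (e : rel 'I_n) : nat :=
  \big[minn/commtime e 1%g]_(pi : {perm 'I_n}) commtime e pi.

Definition Tmax (n : nat) (e : rel 'I_n) : nat :=
  \max_(pi : {perm 'I_n}) commtime e pi.

From mathcomp Require Import all_boot all_order all_fingroup zify.
Set Implicit Arguments. Unset Strict Implicit. Unset Printing Implicit Defensive.

(* Let D = d(u, v) be the diameter. Visiting a shortest u-v path first (D steps
   of length 1) and then the other n - 1 - D vertices (steps of length at most D)
   costs at most D (n - D) <= floor(n/2) ceil(n/2). This is attained by the broom
   with handle 0 -> 1 -> ... -> c-1, c = ceil(n/2) - 1, in which c-1 points to
   every vertex v >= c and every such v points back to 0: these n - c vertices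
   are pairwise at distance c+1, and by the triangle inequality an ordering costs
   at least its restriction to them. For T_max, every distance is at most n-1,
   and in the cycle n-1 -> ... -> 1 -> 0 -> n-1 every step i -> i+1 of the
   natural ordering has length n-1. *)

Section Distance.

Variables (n : nat) (e : rel 'I_n).

Lemma dist_leq k u v : walkb e k u v -> dist e u v <= k.
Proof.
move=> walk_uv; rewrite /dist; case: (ltnP k n) => [k_lt_n|n_le_k].
- rewrite leqNgt; apply/negP => /(before_find 0).
  by rewrite nth_iota // add0n walk_uv.
- by apply: leq_trans (find_size _ _) _; rewrite size_iota.
Qed.

Lemma walkb_dist u v : dist e u v < n -> walkb e (dist e u v) u v.
Proof.
move=> dist_lt; have found : has (fun k => walkb e k u v) (iota 0 n).
  by rewrite has_find size_iota.
by have := nth_find 0 found; rewrite nth_iota // add0n.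
Qed.

Lemma dist_geq K u v :
  K <= n -> (forall k, k < K -> ~~ walkb e k u v) -> K <= dist e u v.
Proof.
move=> K_le_n no_walk; rewrite leqNgt; apply/negP => dist_lt.
by have := no_walk _ dist_lt; rewrite walkb_dist // (leq_trans dist_lt).
Qed.

Lemma walkb_cat k1 k2 u v w :
  walkb e k1 u v -> walkb e k2 v w -> walkb e (k1 + k2) u w.
Proof.
move=> /existsP [p /andP [p_path /eqP p_last]] /existsP [q /andP [q_path /eqP q_last]].
apply/existsP; exists [tuple of p ++ q].
by rewrite cat_path last_cat p_last p_path q_path q_last eqxx.
Qed.

Lemma dist_edge u v : e u v -> dist e u v <= 1.
Proof.
by move=> uv; apply: dist_leq; apply/existsP; exists [tuple v]; rewrite /= uv eqxx.
Qed.

Lemma uniq_path_dist u p : path e u p ->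
  exists q, [/\ path e u q, uniq (u :: q), last u q = last u p
              & dist e u (last u p) <= size q < n].
Proof.
move=> p_path; case: (shortenP p_path) => q q_path q_uniq _.
exists q; split=> //; apply/andP; split.
- by apply: dist_leq; apply/existsP; exists (in_tuple q); rewrite /= q_path eqxx.
- have := uniq_leq_size q_uniq (fun x _ => mem_enum 'I_n x).
  by rewrite size_enum_ord.
Qed.

Hypothesis e_sc : strongly_connected e.

Lemma dist_ltn u v : dist e u v < n.
Proof.
have /connectP [p p_path ->] := e_sc u v.
have [q [_ _ _ /andP [dist_le size_lt]]] := uniq_path_dist p_path.
exact: leq_ltn_trans dist_le size_lt.
Qed.

Lemma dist_triangle u v w : dist e u w <= dist e u v + dist e v w.
Proof. by apply/dist_leq/walkb_cat; apply/walkb_dist/dist_ltn. Qed.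

End Distance.

Section Cost.

Variables (n : nat) (e : rel 'I_n).

Definition cost (s : seq 'I_n) := \sum_(q <- zip s (behead s)) dist e q.1 q.2.

Definition visit_seq (pi : {perm 'I_n}) := [seq (pi^-1)%g i | i <- enum 'I_n].

Lemma commtimeE pi : commtime e pi = cost (visit_seq pi).
Proof. by []. Qed.

Lemma cost_cons2 x y s : cost [:: x, y & s] = dist e x y + cost (y :: s).
Proof. by rewrite /cost /= big_cons. Qed.

Lemma cost0 : cost [::] = 0.
Proof. by rewrite /cost big_nil. Qed.

Lemma cost1 x : cost [:: x] = 0.
Proof. by rewrite /cost big_nil. Qed.

Lemma cost_leq D s : (forall u v, dist e u v <= D) -> cost s <= (size s).-1 * D.
Proof.
move=> dist_le; elim: s => [|x [|y s] IH]; rewrite ?cost0 ?cost1 //.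
by rewrite cost_cons2 /= mulSn leq_add.
Qed.

Lemma cost_path_cat D x p r : (forall u v, dist e u v <= D) ->
  path e x p -> cost (x :: p ++ r) <= size p + size r * D.
Proof.
move=> dist_le; elim: p x => [|y p IH] x /=.
  by move=> _; apply: leq_trans (cost_leq _ dist_le) _.
case/andP=> xy p_path; rewrite cost_cons2 addSn -add1n.
by rewrite leq_add ?dist_edge ?IH.
Qed.

Lemma cost_geq_path K x s :
  path (fun u v => K <= dist e u v) x s -> size s * K <= cost (x :: s).
Proof.
elim: s x => [|y s IH] x //= /andP [xy s_path].
by rewrite cost_cons2 mulSn leq_add ?IH.
Qed.

Hypothesis dist_triangle : forall u v w, dist e u w <= dist e u v + dist e v w.

Lemma cost_filter_cons (P : pred 'I_n) x s : cost (x :: filter P s) <= cost (x :: s).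
Proof.
elim: s x => [|y s IH] x //=; rewrite cost_cons2.
case: (P y); first by rewrite cost_cons2 leq_add2l.
apply: leq_trans (IH x) _; case: s {IH} => [|z s]; first by rewrite !cost1.
by rewrite !cost_cons2 addnA leq_add2r.
Qed.

Lemma cost_filter (P : pred 'I_n) s : cost (filter P s) <= cost s.
Proof.
elim: s => [|y s IH] //=; case: (P y); first exact: cost_filter_cons.
apply: leq_trans IH _; case: s => [|z s]; first by rewrite cost0.
by rewrite cost_cons2 leq_addl.
Qed.

End Cost.

Lemma visit_seqP n (s : seq 'I_n) :
  reflect (exists pi, visit_seq pi = s) (perm_eq s (enum 'I_n)).
Proof.
have visitE (p : {perm 'I_n}) :
    visit_seq p^-1 = [tuple tnth (ord_tuple n) (p i) | i < n].
  by rewrite /visit_seq invgK /=; apply: eq_map => i; rewrite tnth_ord_tuple.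
rewrite -val_ord_tuple; apply: (iffP tuple_permP) => [[p ->]|[pi <-]].
- by exists p^-1%g.
- by exists pi^-1%g; rewrite -visitE invgK.
Qed.

Lemma Tmin_leq n (e : rel 'I_n) pi : Tmin e <= commtime e pi.
Proof.
rewrite /Tmin unlock /reducebig.
have : pi \in index_enum {perm 'I_n} by rewrite mem_index_enum.
elim: (index_enum _) => [|pi' r IH] //=; rewrite inE => /predU1P [<-|pi_r].
- exact: geq_minl.
- exact: leq_trans (geq_minr _ _) (IH pi_r).
Qed.

Lemma Tmin_geq n (e : rel 'I_n) m : (forall pi, m <= commtime e pi) -> m <= Tmin e.
Proof.
move=> m_le; apply: (big_ind (leq m)) => // x y m_le_x m_le_y.
by rewrite leq_min m_le_x.
Qed.

Lemma mul_subn_leq_halves k n : k * (n - k) <= n./2 * uphalf n.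
Proof.
rewrite uphalf_half; have := odd_double_half n.
by case: (odd n) => /= <-; rewrite -muln2; case: (leqP k n./2) => hk; nia.
Qed.

Lemma Tmin_leq_halves n (e : rel 'I_n) :
  0 < n -> strongly_connected e -> Tmin e <= n./2 * uphalf n.
Proof.
move=> n_gt0 e_sc.
have pairs_gt0 : 0 < #|{: 'I_n * 'I_n}| by rewrite card_prod card_ord muln_gt0 n_gt0.
have [[u v] /= diamE] := eq_bigmax (fun q : 'I_n * 'I_n => dist e q.1 q.2) pairs_gt0.
set D := \max_(q : 'I_n * 'I_n) dist e q.1 q.2 in diamE.
have dist_le u' v' : dist e u' v' <= D.
  exact: (leq_bigmax (F := fun q : 'I_n * 'I_n => dist e q.1 q.2) (u', v')).
have /existsP [p0 /andP [p0_path /eqP p0_last]] := walkb_dist (dist_ltn e_sc u v).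
have [p [p_path p_uniq _ /andP [D_le size_lt]]] := uniq_path_dist p0_path.
rewrite p0_last -diamE in D_le.
set r := [seq x <- enum 'I_n | x \notin u :: p].
have perm_enum : perm_eq ((u :: p) ++ r) (enum 'I_n).
  apply: uniq_perm; rewrite ?enum_uniq //.
  - rewrite cat_uniq p_uniq filter_uniq ?enum_uniq // andbT.
    by apply/hasPn => x; rewrite mem_filter => /andP [].
  - by move=> x; rewrite mem_enum mem_cat mem_filter mem_enum andbT orbN.
have /visit_seqP [pi piE] := perm_enum.
have size_r : size r = n - (size p).+1.
  by have := perm_size perm_enum; rewrite size_cat size_enum_ord /=; lia.
apply: leq_trans (Tmin_leq e pi) _; rewrite commtimeE piE.
apply: leq_trans (cost_path_cat r dist_le p_path) _.
apply: leq_trans (mul_subn_leq_halves (size p) n); rewrite size_r.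
have := leq_mul (leqnn (n - (size p).+1)) D_le; nia.
Qed.

Lemma Tmax_leq n (e : rel 'I_n) : strongly_connected e -> Tmax e <= (n - 1) ^ 2.
Proof.
move=> e_sc; apply/bigmax_leqP => pi _; rewrite commtimeE.
have dist_le u v : dist e u v <= n - 1 by have := dist_ltn e_sc u v; lia.
apply: leq_trans (cost_leq _ dist_le) _.
by rewrite size_map size_enum_ord -subn1.
Qed.

Lemma hub_strongly_connected n (e : rel 'I_n) z :
  (forall u, connect e u z) -> (forall v, connect e z v) -> strongly_connected e.
Proof. by move=> to_z from_z u v; apply: connect_trans (to_z u) (from_z v). Qed.

Definition backward_cycle n : rel 'I_n := fun u v => val u == (val v).+1 %% n.

Lemma backward_cycle_descend n (u v : 'I_n) : v <= u -> connect (@backward_cycle n) u v.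
Proof.
move=> /subnK; move: (u - v) => k; elim: k u => [|k IH] u uE.
  by have -> : u = v by apply: val_inj; rewrite /= -uE.
have vk_lt : k + v < n by have := ltn_ord u; lia.
apply: connect_trans (IH (Ordinal vk_lt) erefl); apply: connect1.
by rewrite /backward_cycle /= -addSn uE modn_small.
Qed.

Lemma backward_cycle_sc n : strongly_connected (@backward_cycle n).
Proof.
case: n => [[]//|n]; apply: (hub_strongly_connected (z := ord0)) => v.
  exact: backward_cycle_descend.
apply: (connect_trans (y := ord_max)).
  by apply: connect1; rewrite /backward_cycle /= modnn.
by apply: backward_cycle_descend; rewrite /= -ltnS.
Qed.

Lemma backward_cycle_path n (u : 'I_n) p :
  path (@backward_cycle n) u p -> (last u p + size p) %% n = u.
Proof.
elim: p u => [|y p IH] u /=; first by rewrite addn0 modn_small.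
case/andP=> /eqP uE /IH pE.
by rewrite addnS -addn1 -modnDml pE addn1 uE.
Qed.

Lemma backward_cycle_dist_succ n (u v : 'I_n) :
  v = u.+1 :> nat -> n - 1 <= dist (@backward_cycle n) u v.
Proof.
move=> vE; apply: dist_geq; first exact: leq_subr.
move=> k k_lt; apply/negP => /existsP [p /andP [p_path /eqP p_last]].
have := backward_cycle_path p_path; rewrite p_last size_tuple vE.
have := ltn_ord v; rewrite vE => u_lt.
case: (ltnP (u.+1 + k) n) => [sum_lt|sum_ge].
- by rewrite modn_small // => /eqP; lia.
- have -> : u.+1 + k = n + (u.+1 + k - n) by lia.
  by rewrite modnDl modn_small => [/eqP|]; lia.
Qed.

Lemma enum_ord_succ n : sorted [rel u v : 'I_n | v == u.+1 :> nat] (enum 'I_n).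
Proof.
case: n => [|n]; first by rewrite enum_ord0.
apply/(sortedP ord0) => i; rewrite size_enum_ord => i_lt.
by rewrite /= !nth_enum_ord // ltnW.
Qed.

Lemma Tmax_backward_cycle n : Tmax (@backward_cycle n) = (n - 1) ^ 2.
Proof.
apply/eqP; rewrite eqn_leq (Tmax_leq (@backward_cycle_sc n)) /=.
apply: leq_trans (leq_bigmax 1%g); rewrite commtimeE.
have -> : visit_seq 1%g = enum 'I_n.
  by rewrite /visit_seq invg1 map_id_in // => i; rewrite perm1.
have := enum_ord_succ n; have := size_enum_ord n.
case: (enum 'I_n) => [<-|x s size_xs s_succ] //.
have n1E : n - 1 = size s by move: size_xs => /=; lia.
rewrite -mulnn {1}n1E; apply/cost_geq_path/(sub_path _ s_succ) => u v /eqP.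
exact: backward_cycle_dist_succ.
Qed.

Definition broom n c : rel 'I_n := fun u v =>
  [|| (v == u.+1 :> nat) && (v < c), (c <= u) && (v == 0 :> nat)
    | (u == c.-1 :> nat) && (c <= v)].

Lemma broom_ascend n c (u v : 'I_n) : u <= v < c -> connect (broom c) u v.
Proof.
case/andP=> /subnK vE v_lt; move: (v - u) vE v_lt => k.
elim: k v => [|k IH] v vE v_lt.
  by have -> : v = u by apply: val_inj; rewrite /= -vE.
have uk_lt : k + u < n by have := ltn_ord v; lia.
apply: connect_trans (IH (Ordinal uk_lt) erefl _) _; first by rewrite /=; lia.
by apply: connect1; rewrite /broom /= -addSn vE eqxx v_lt.
Qed.

Lemma broom_sc n c : 0 < c < n -> strongly_connected (@broom n c).
Proof.
case/andP=> c_gt0 c_lt; have c1_lt : c.-1 < n by lia.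
have n_gt0 : 0 < n by lia.
pose z := Ordinal n_gt0; pose w := Ordinal c1_lt; pose x := Ordinal c_lt.
have to_z (u : 'I_n) : c <= u -> connect (broom c) u z.
  by move=> c_le_u; apply: connect1; rewrite /broom /= c_le_u.
have z_w : connect (broom c) z w by apply: broom_ascend => /=; lia.
have w_to (v : 'I_n) : c <= v -> connect (broom c) w v.
  by move=> c_le_v; apply: connect1; rewrite /broom /= eqxx c_le_v !orbT.
apply: (hub_strongly_connected (z := z)) => v; case: (leqP c v) => [c_le_v|v_lt].
- exact: to_z.
- apply: connect_trans (to_z x (leqnn c)).
  apply: connect_trans (w_to x (leqnn c)).
  by apply: broom_ascend => /=; lia.
- exact: connect_trans z_w (w_to v c_le_v).
- by apply: broom_ascend => /=; lia.
Qed.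

Lemma broom_path n c (u : 'I_n) p :
  path (broom c) u p -> u + size p < c -> last u p = u + size p :> nat.
Proof.
elim: p u => [|y p IH] u /=; first by rewrite addn0.
case/andP=> uy p_path size_lt.
have yE : y = u.+1 :> nat.
  by move: uy size_lt; rewrite /broom; case/or3P => /andP [/eqP ? ?]; lia.
by rewrite IH ?yE; lia.
Qed.

Lemma broom_dist n c (u v : 'I_n) : 0 < c < n -> u != v -> c <= u -> c <= v ->
  c.+1 <= dist (broom c) u v.
Proof.
case/andP=> c_gt0 c_lt u_neq_v c_le_u c_le_v; apply: dist_geq => // k k_lt.
apply/negP => /existsP [[[|y p] //= size_p]].
  by rewrite (negbTE u_neq_v).
case/andP=> /andP [uy p_path] /eqP p_last.
(* A walk leaving u >= c enters the handle at 0 and leaves it only from c-1. *)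
have y0 : y = 0 :> nat.
  by move: uy; rewrite /broom; case/or3P => /andP [/eqP yE y_lt] //; lia.
have {}size_p : (size p).+1 = k by apply/eqP.
have : v = size p :> nat by rewrite -p_last (broom_path p_path) y0 // add0n -ltnS size_p.
by move=> vE; move: k_lt; rewrite -size_p ltnS ltnNge -vE c_le_v.
Qed.

Lemma count_enum_ord_geq n c :
  c <= n -> count (fun v : 'I_n => c <= v) (enum 'I_n) = n - c.
Proof.
move=> c_le_n; rewrite -(count_map val (leq c)) val_enum_ord.
rewrite -{1}(subnKC c_le_n) iotaD count_cat add0n.
rewrite (@eq_in_count _ _ pred0) ?count_pred0; last first.
  by move=> x; rewrite mem_iota /= => x_lt; rewrite leqNgt x_lt.
rewrite (@eq_in_count _ _ predT) ?count_predT ?size_iota //.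
by move=> x; rewrite mem_iota => /andP [].
Qed.

Lemma Tmin_broom n c : 0 < c < n -> (n - c).-1 * c.+1 <= Tmin (@broom n c).
Proof.
move=> c_range; apply: Tmin_geq => pi; rewrite commtimeE.
pose P := fun v : 'I_n => c <= v.
have dist_tri := dist_triangle (broom_sc c_range).
apply: leq_trans (cost_filter dist_tri P _).
have perm_visit : perm_eq (visit_seq pi) (enum 'I_n) by apply/visit_seqP; exists pi.
have size_filter_P : size (filter P (visit_seq pi)) = n - c.
  rewrite size_filter (seq.permP perm_visit) count_enum_ord_geq //.
  by case/andP: c_range => _ /ltnW.
have : uniq (filter P (visit_seq pi)).
  by rewrite filter_uniq // (perm_uniq perm_visit) enum_uniq.
have := filter_all P (visit_seq pi); rewrite -size_filter_P.
case: (filter P _) => [|x s] // all_xs uniq_xs.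
have distinct_far :
    {in P &, subrel [rel u v | u != v] (fun u v => c.+1 <= dist (broom c) u v)}.
  by move=> u v Pu Pv /= uv; apply: broom_dist.
apply/cost_geq_path/(sub_in_path distinct_far all_xs).
by apply: (@pairwise_sorted _ _ (x :: s)); rewrite -uniq_pairwise.
Qed.

Lemma uphalf_pred_range n : 3 <= n -> 0 < (uphalf n).-1 < n.
Proof. by rewrite uphalf_half; case: (odd n) (odd_double_half n) => /= nE; lia. Qed.

Lemma Tmin_broom_halves n : 3 <= n -> Tmin (@broom n (uphalf n).-1) = n./2 * uphalf n.
Proof.
move=> n_ge3; have c_range := uphalf_pred_range n_ge3.
apply/eqP; rewrite eqn_leq (Tmin_leq_halves (leq_trans _ n_ge3) (broom_sc c_range)) //=.
apply: leq_trans (Tmin_broom c_range); rewrite prednK; last by case: (uphalf n) c_range.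
apply: eq_leq; congr (_ * _).
by rewrite uphalf_half; case: (odd n) (odd_double_half n) => /= nE; lia.
Qed.

Theorem proposition2 (n : nat) (hn : 3 <= n) :
  ((forall e : rel 'I_n, strongly_connected e -> Tmin e <= n./2 * uphalf n) /\
   (exists e : rel 'I_n, strongly_connected e /\ Tmin e = n./2 * uphalf n)) /\
  ((forall e : rel 'I_n, strongly_connected e -> Tmax e <= (n - 1) ^ 2) /\
   (exists e : rel 'I_n, strongly_connected e /\ Tmax e = (n - 1) ^ 2)).
Proof.
have n_gt0 : 0 < n by apply: leq_trans hn.
split; split.
- by move=> e; apply: Tmin_leq_halves.
- exists (broom (uphalf n).-1); split; last exact: Tmin_broom_halves.
  exact/broom_sc/uphalf_pred_range.
- exact: Tmax_leq.
- exists (@backward_cycle n); split; first exact: backward_cycle_sc.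
  exact: Tmax_backward_cycle.
Qed.
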